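(* Let $H_i=H_i(x_{i-1},x_i)$ for $i\in[1,n]$ be two-terminal signed graphs and $G=\mathcal S(H_1,\dots,H_n)$ with $n=|\mathcal B(G)|\ge 2$. Suppose $\mathcal B_0(G)=\emptyset$, $\mathcal B_2(G)\neq\emptyset$, and every $H_i\in\mathcal B_2(G)$ has a $\Psi_{x_{i-1}x_i}(2)$-cover. Then exactly one of the following holds: (1) $G$ has a $\Psi_{x_0x_n}(2)$-cover in which no tadpole at $x_0$ contains the vertex $x_n$ and no tadpole at $x_n$ contains the vertex $x_0$; (2) $\mathcal B_2(G)=\{H_1\}$ and every $\Psi_{x_0x_1}(2)$-cover of $H_1$ contains a tadpole at $x_1$ containing the vertex $x_0$; (3) $\mathcal B_2(G)=\{H_n\}$ and every $\Psi_{x_{n-1}x_n}(2)$-cover of $H_n$ contains a tadpole at $x_{n-1}$ containing the vertex $x_n$.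
   Context: Signed graph: a finite graph (multiple edges and loops allowed) with signature $\sigma:E\to\{1,-1\}$. For a subgraph $S$, $\sigma(S)=\prod_{e\in S}\sigma(e)$; a path is positive if its sign is $1$, negative otherwise. A circuit is a connected $2$-regular subgraph; balanced if it has an even number of negative edges, unbalanced otherwise. A barbell is the union of two unbalanced circuits $C_1,C_2$ and a path $P$ such that either $P$ is trivial and $C_1,C_2$ share exactly one vertex, or $C_1,C_2$ are vertex-disjoint and $P$ joins them meeting $C_1\cup C_2$ only at its ends. A signed circuit is a balanced circuit or a barbell. A tadpole at $x$ is the union of an $xy$-path $P$ (possibly trivial) and an unbalanced circuit $C$ with $V(P)\cap V(C)=\{y\}$. A signed subgraph $6$-cover is a family (multiset) of subgraphs such that every edge lies in exactly $6$ members. For distinct vertices $x,y$ and $t\in[0,3]$, a $\Psi_{xy}(t)$-cover is a signed subgraph $6$-cover consisting of exactly $t$ positive $xy$-paths, $t$ negative $xy$-paths, $t$ tadpoles at $x$, $6-2t$ tadpoles at $y$, and some signed circuits. A two-terminal signed graph $H(x,y)$ is a connected nonempty signed graph with source terminal $x$ and target terminal $y$, where $x=y$ iff $H$ is a single negative loop. The series connection $\mathcal S(H_1,\dots,H_n)$ of pairwise disjoint $H_i(x_i,y_i)$ is obtained from $H_1\cup\dots\cup H_n$ by identifying $y_{i-1}$ with $x_i$ for $i\in[2,n]$, with source $x_1$ and target $y_n$. If $G=\mathcal S(H_1,\dots,H_n)$ with $n$ maximum, the $H_i$ are the parts of $G$, forming $\mathcal B(G)$; $\mathcal B_0(G)$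 = parts with equal terminals (negative loops), $\mathcal B_1(G)$ = parts with distinct terminals and one edge, $\mathcal B_2(G)$ = parts with distinct terminals and at least two edges. *)

From mathcomp Require Import all_boot.
Set Implicit Arguments. Unset Strict Implicit. Unset Printing Implicit Defensive.

(* A signed graph is given by a finite vertex type V, a finite edge type E,
   an endpoint map [ends : E -> V * V] (a loop has equal endpoints; the order
   of the pair is irrelevant) and [neg : E -> bool] (neg e = true iff
   sigma(e) = -1).  Subgraphs without isolated vertices are represented by
   their edge sets [{set E}]. *)
Section SignedGraph.
Variables (V E : finType) (ends : E -> V * V) (neg : E -> bool).

Definition incident (v : V) (e : E) : bool := ((ends e).1 == v) || ((ends e).2 == v).

Definition VS (S : {set E}) : {set V} := [set v | [exists e in S, incident v e]].

(* degree of v in S (a loop counts twice) *)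
Definition deg (S : {set E}) (v : V) : nat :=
  \sum_(e in S) (((ends e).1 == v) + ((ends e).2 == v)).

Definition adj (S : {set E}) : rel V := fun u v =>
  [exists e in S, (((ends e).1 == u) && ((ends e).2 == v)) ||
                  (((ends e).1 == v) && ((ends e).2 == u))].

Definition connected (S : {set E}) : Prop :=
  S != set0 /\ forall u v, u \in VS S -> v \in VS S -> connect (adj S) u v.

Definition negative (S : {set E}) : bool := odd #|[set e in S | neg e]|.

Definition circuit (C : {set E}) : Prop :=
  connected C /\ forall v, v \in VS C -> deg C v = 2.

Definition balanced_circuit (C : {set E}) : Prop := circuit C /\ ~~ negative C.
Definition unbalanced_circuit (C : {set E}) : Prop := circuit C /\ negative C.

Definition xypath (x y : V) (P : {set E}) : Prop :=
  x != y /\ connected P /\ deg P x = 1 /\ deg P y = 1 /\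
  forall v, v \in VS P -> v != x -> v != y -> deg P v = 2.

Definition barbell (B : {set E}) : Prop :=
  exists C1 C2 P : {set E},
    B = C1 :|: C2 :|: P /\ unbalanced_circuit C1 /\ unbalanced_circuit C2 /\
    [disjoint C1 & C2] /\
    ((P = set0 /\ #|VS C1 :&: VS C2| = 1) \/
     (VS C1 :&: VS C2 = set0 /\
      exists u v, u \in VS C1 /\ v \in VS C2 /\ xypath u v P /\
                  VS P :&: (VS C1 :|: VS C2) = [set u; v])).

Definition signed_circuit (S : {set E}) : Prop := balanced_circuit S \/ barbell S.

Definition tadpole (x : V) (T : {set E}) : Prop :=
  exists (y : V) (P C : {set E}),
    T = P :|: C /\ unbalanced_circuit C /\
    ((P = set0 /\ y = x /\ x \in VS C) \/
     (xypath x y P /\ VS P :&: VS C = [set y])).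

(* Psi_{xy}(t)-cover of the subgraph with edge set EH, given as five lists:
   positive xy-paths, negative xy-paths, tadpoles at x, tadpoles at y and
   signed circuits; every edge of EH lies in exactly 6 members. *)
Definition psi_cover (EH : {set E}) (x y : V) (t : nat)
  (Pp Pn Tx Ty Cs : seq {set E}) : Prop :=
  t <= 3 /\
  size Pp = t /\ size Pn = t /\ size Tx = t /\ size Ty = 6 - t.*2 /\
  (forall S, S \in Pp ++ Pn ++ Tx ++ Ty ++ Cs -> S \subset EH) /\
  (forall P, P \in Pp -> xypath x y P /\ ~~ negative P) /\
  (forall P, P \in Pn -> xypath x y P /\ negative P) /\
  (forall T, T \in Tx -> tadpole x T) /\
  (forall T, T \in Ty -> tadpole y T) /\
  (forall C, C \in Cs -> signed_circuit C) /\
  (forall e, e \in EH -> count (fun S : {set E} => e \in S) (Pp ++ Pn ++ Tx ++ Ty ++ Cs) = 6).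

Definition has_psi_cover (EH : {set E}) (x y : V) (t : nat) : Prop :=
  exists Pp Pn Tx Ty Cs, psi_cover EH x y t Pp Pn Tx Ty Cs.

(* edge set of the i-th part (0-indexed) *)
Definition part (p : E -> nat) (i : nat) : {set E} := [set e | p e == i].

Definition single_neg_loop (S : {set E}) : Prop :=
  exists e, S = [set e] /\ (ends e).1 = (ends e).2 /\ neg e.

(* G (whose edge set is all of E) is the series connection S(H_0,...,H_{m-1})
   with source s and target t, where H_i is the subgraph with edge set
   [part p i] and terminals x i, x i.+1. Vertices of distinct parts H_i, H_j
   (i<j) are identified exactly along the chain of terminal identifications. *)
Definition series_decomp (s t : V) (m : nat) (x : nat -> V) (p : E -> nat) : Prop :=
  x 0 = s /\ x m = t /\ (forall e, p e < m) /\
  (forall i, i < m ->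
     connected (part p i) /\ x i \in VS (part p i) /\ x i.+1 \in VS (part p i) /\
     (x i = x i.+1 <-> single_neg_loop (part p i))) /\
  (forall i j v, i < j -> j < m ->
     (v \in VS (part p i) /\ v \in VS (part p j) <->
      forall k, i < k <= j -> v = x k)).

Definition inB2 (x : nat -> V) (p : E -> nat) (i : nat) : Prop :=
  x i != x i.+1 /\ 2 <= #|part p i|.

End SignedGraph.

From Pilot Require Import Defs.
From mathcomp Require Import all_boot zify.
From Stdlib Require Import Classical.
Set Implicit Arguments. Unset Strict Implicit. Unset Printing Implicit Defensive.

(* The inner terminals x_1, ..., x_(n-1) are cut vertices of G, and Psi(2)-covers
   can be glued at a cut vertex: a cover of G_k = S(H_1, ..., H_k) from x_0 to x_k
   and a cover of H_(k+1) combine by pairing paths so that the unions get the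
   right signs and by merging the tadpoles at x_k pairwise into barbells, while a
   one-edge part simply extends every path and every tadpole at x_k.  Sweeping
   from H_1 to H_n gives a cover of G whose tadpoles at x_0 come from the first
   part in B_2, hence miss x_n, and whose tadpoles at x_n come from the last part
   in B_2, hence miss x_0, unless that part is H_1 (resp. H_n) and all of its
   covers fail in this respect: these are (2) and (3).  Conversely, when B_2 =
   {H_1}, a cover as in (1) can be cut back along the pendant edges H_n, ...,
   H_2 to a cover of H_1 whose tadpoles at x_1 miss x_0, so (1) excludes (2);
   reversing the series connection, (1) excludes (3). *)

Section SignedGraphFacts.
Variables (V E : finType) (ends : E -> V * V) (neg : E -> bool).
Local Notation VS := (VS ends).
Local Notation deg := (deg ends).
Local Notation adj := (adj ends).
Local Notation incident := (incident ends).
Local Notation connected := (connected ends).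
Local Notation negative := (negative neg).
Local Notation circuit := (circuit ends).
Local Notation unbalanced_circuit := (unbalanced_circuit ends neg).
Local Notation xypath := (xypath ends).
Local Notation tadpole := (tadpole ends neg).
Local Notation barbell := (barbell ends neg).
Local Notation signed_circuit := (signed_circuit ends neg).
Local Notation psi_cover := (psi_cover ends neg).
Implicit Types (S T A B P C Q X Y : {set E}) (u v w a b y : V) (e f : E).
Implicit Types (Pp Pn Tx Ty Cs : seq {set E}).

Lemma VSP v S : reflect (exists2 e, e \in S & incident v e) (v \in VS S).
Proof.
rewrite inE; apply: (iffP exists_inP) => [[e]|[e]]; by exists e.
Qed.

Lemma VS_subset S T : S \subset T -> VS S \subset VS T.
Proof.
move=> sST; apply/subsetP => v /VSP[e eS ve]; apply/VSP; exists e => //.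
exact: (subsetP sST).
Qed.

Lemma mem_VS_subset S T v : S \subset T -> v \in VS S -> v \in VS T.
Proof. by move/VS_subset/subsetP; apply. Qed.

Lemma VSU S T : VS (S :|: T) = VS S :|: VS T.
Proof.
apply/setP => v; rewrite in_setU; apply/VSP/orP.
- by case=> e; rewrite inE => /orP[] eS ve; [left|right]; apply/VSP; exists e.
- by case=> /VSP[e eS ve]; exists e; rewrite // inE eS ?orbT.
Qed.

Lemma VS0 : VS set0 = set0.
Proof. by apply/setP => v; rewrite in_set0; apply/VSP => -[e]; rewrite inE. Qed.

Lemma VS1 e : VS [set e] = [set (ends e).1; (ends e).2].
Proof.
apply/setP => v; rewrite in_set2; apply/VSP/idP.
- by case=> f /set1P-> /orP[] /eqP->; rewrite eqxx ?orbT.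
- by move=> ve; exists e; rewrite ?set11 // /incident !(eq_sym _ v).
Qed.

Lemma VS_set1 e v : (v \in VS [set e]) = incident v e.
Proof. by rewrite VS1 !inE /incident !(eq_sym v). Qed.

Definition ends_mult e v : nat := ((ends e).1 == v) + ((ends e).2 == v).

Lemma ends_mult_gt0 e v : (0 < ends_mult e v) = incident v e.
Proof. by rewrite /ends_mult /incident; case: eqP; case: eqP. Qed.

Lemma ends_mult_le1 e v : (ends e).1 != (ends e).2 -> ends_mult e v <= 1.
Proof.
rewrite /ends_mult; case: (eqVneq (ends e).1 v) => [<-|_] /=.
  by rewrite eq_sym => /negbTE->.
by case: (_ == v).
Qed.

Lemma deg_setU S T v : [disjoint S & T] -> deg (S :|: T) v = deg S v + deg T v.
Proof. by move=> dST; rewrite /Defs.deg -bigU //; apply: eq_bigl => e; rewrite inE. Qed.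

Lemma deg_set1 e v : deg [set e] v = ends_mult e v.
Proof. by rewrite /Defs.deg big_set1. Qed.

Lemma deg_setD1 S e v : e \in S -> deg S v = deg (S :\ e) v + ends_mult e v.
Proof.
move=> eS; rewrite -deg_set1 -deg_setU 1?setUC ?setD1K //.
by rewrite disjoint_sym disjoints1 setD11.
Qed.

Lemma deg_subset S T v : S \subset T -> deg S v <= deg T v.
Proof.
move=> sST; rewrite -(setID T S) (setIidPr sST) deg_setU ?leq_addr //.
by rewrite -setI_eq0 setIDA setIC setDIl setDv setI0.
Qed.

Lemma deg_gt0 S v : (0 < deg S v) = (v \in VS S).
Proof.
rewrite lt0n sum_nat_eq0; apply/forall_inPn/VSP => -[e eS ve]; exists e => //.
- by rewrite -ends_mult_gt0 lt0n.
- by rewrite -lt0n ends_mult_gt0.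
Qed.

Lemma deg_notin S v : v \notin VS S -> deg S v = 0.
Proof. by rewrite -deg_gt0 lt0n negbK => /eqP. Qed.

Lemma negative_setU S T :
  [disjoint S & T] -> negative (S :|: T) = negative S (+) negative T.
Proof.
move=> dST; rewrite /Defs.negative -oddD -cardsUI.
have -> : [set e in S :|: T | neg e] = [set e in S | neg e] :|: [set e in T | neg e].
  by apply/setP => e; rewrite !inE andb_orl.
suff -> : [set e in S | neg e] :&: [set e in T | neg e] = set0 by rewrite cards0 addn0.
apply/setP => e; rewrite !inE andbACA andbb.
by case eS: (e \in S); rewrite //= (disjointFr dST eS).
Qed.

Lemma negative_set1 e : negative [set e] = neg e.
Proof.
rewrite /Defs.negative (_ : [set f in [set e] | neg f] = if neg e then [set e] else set0).
  by case: (neg e); rewrite ?cards1 ?cards0.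
by case ne: (neg e); apply/setP => f; rewrite !inE; case: (eqVneq f e) => [->|].
Qed.

Lemma adjC S u v : adj S u v = adj S v u.
Proof. by apply/exists_inP/exists_inP => -[e eS h]; exists e; rewrite // orbC. Qed.

Lemma connect_adj_sym S : connect_sym (adj S).
Proof. exact/sym_connect_sym/adjC. Qed.

Lemma adj_memVS S u v : adj S u v -> u \in VS S /\ v \in VS S.
Proof.
case/exists_inP => e eS /orP[] /andP[/eqP e1 /eqP e2];
  by split; apply/VSP; exists e; rewrite // /incident ?e1 ?e2 eqxx ?orbT.
Qed.

Lemma connect_memVS S u v : connect (adj S) u v -> u != v -> u \in VS S.
Proof.
case/connectP => -[|z q] /= => [_ -> |/andP[/adj_memVS[] //]]; by rewrite eqxx.
Qed.

Lemma connect_subset S T u v :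
  S \subset T -> connect (adj S) u v -> connect (adj T) u v.
Proof.
move=> sST; apply: connect_sub => a b /exists_inP[e eS h]; apply/connect1/exists_inP.
by exists e; first exact: (subsetP sST).
Qed.

Lemma connected_setU S T w :
  connected S -> connected T -> w \in VS S -> w \in VS T -> connected (S :|: T).
Proof.
move=> [S0 cS] [_ cT] wS wT; split; first by rewrite setU_eq0 negb_and S0.
have to_w z : z \in VS (S :|: T) -> connect (adj (S :|: T)) z w.
  rewrite VSU inE => /orP[] zV.
  - exact: connect_subset (subsetUl S T) (cS _ _ zV wS).
  - exact: connect_subset (subsetUr S T) (cT _ _ zV wT).
by move=> u v /to_w uw /to_w vw; apply: connect_trans uw _; rewrite connect_adj_sym.
Qed.

Lemma connected_set1 e : connected [set e].
Proof.
split; first by apply/set0Pn; exists e; rewrite inE.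
have a12 : adj [set e] (ends e).1 (ends e).2 by apply/exists_inP; exists e; rewrite ?inE ?eqxx.
have a21 : adj [set e] (ends e).2 (ends e).1 by rewrite adjC.
move=> u v; rewrite VS1 !inE => /orP[] /eqP-> /orP[] /eqP->;
  by [rewrite connect0 | apply: connect1].
Qed.

(* Walks of [S] project onto walks of [S'] when every edge of [S] outside [S']
   meets [S'] only in [w]: vertices outside [S'] are sent to [w]. *)
Lemma connect_contract S S' w : S' \subset S ->
  (forall e, e \in S :\: S' -> forall z, incident z e -> z \in VS S' -> z = w) ->
  forall u v, connect (adj S) u v ->
  connect (adj S') (if u \in VS S' then u else w) (if v \in VS S' then v else w).
Proof.
move=> sS hS u v /connectP[q qP ->] {v}; elim: q u qP => [|z q IH] u /=.
  by rewrite connect0.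
case/andP => /exists_inP[e eS uz] /IH; apply: connect_trans.
have [iu iz] : incident u e /\ incident z e.
  by case/orP: uz => /andP[/eqP e1 /eqP e2]; split; rewrite /incident ?e1 ?e2 eqxx ?orbT.
case: (boolP (e \in S')) => eS'.
  have [uS zS] : u \in VS S' /\ z \in VS S' by split; apply/VSP; exists e.
  by rewrite uS zS; apply/connect1/exists_inP; exists e.
have to_w y : incident y e -> (if y \in VS S' then y else w) = w.
  by move=> iy; case: ifP => // yS; apply: (hS e) => //; rewrite inE eS' eS.
by rewrite (to_w _ iu) (to_w _ iz) connect0.
Qed.

Lemma setI_eq_set1 (X Y : {set V}) y : X :&: Y = [set y] <->
  [/\ y \in X, y \in Y & forall v, v \in X -> v \in Y -> v = y].
Proof.
split=> [/setP XY | [yX yY XY]].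
  have memXY v : (v \in X) && (v \in Y) = (v == y) by move: (XY v); rewrite !inE.
  have /andP[yX yY] := etrans (memXY y) (eqxx y).
  by split=> // v vX vY; apply/eqP; rewrite -memXY vX vY.
apply/setP => v; rewrite !inE; apply/andP/eqP => [[]|->]; [exact: XY | by []].
Qed.

Lemma xypath_sym a b P : xypath a b P -> xypath b a P.
Proof.
case=> ab [cP [da [db dP]]]; do !split=> //; first by rewrite eq_sym.
by move=> v vP vb va; apply: dP.
Qed.

Lemma xypath_neq a b P : xypath a b P -> a != b.
Proof. by case. Qed.

Lemma xypath_memVl a b P : xypath a b P -> a \in VS P.
Proof. by case=> _ [_ [da _]]; rewrite -deg_gt0 da. Qed.

Lemma xypath_memVr a b P : xypath a b P -> b \in VS P.
Proof. by move/xypath_sym/xypath_memVl. Qed.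

Lemma xypath_set1 a b e :
  a != b -> a \in VS [set e] -> b \in VS [set e] -> xypath a b [set e].
Proof.
rewrite VS1 !inE => ab ha hb.
have e12 : (ends e).1 != (ends e).2.
  by apply: contraNneq ab => e12; move: ha hb; rewrite e12 !orbb => /eqP-> /eqP->.
have mult1 v : (v == (ends e).1) || (v == (ends e).2) -> ends_mult e v = 1.
  by case/orP=> /eqP->; rewrite /ends_mult eqxx ?(negbTE e12) // eq_sym (negbTE e12).
split=> //; split; first exact: connected_set1.
rewrite !deg_set1 (mult1 a ha) (mult1 b hb); do !split.
move=> v; rewrite VS1 !inE => hv va vb; move: ab va vb.
by case/orP: ha => /eqP->; case/orP: hb => /eqP->; case/orP: hv => /eqP->; rewrite ?eqxx.
Qed.

Lemma circuit_deg C v : circuit C -> v \in VS C -> deg C v = 2.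
Proof. by case=> _; apply. Qed.

Lemma tadpole_deg x T v : tadpole x T -> v \in VS T -> v != x -> 2 <= deg T v.
Proof.
case=> y [P [C [-> [[cC _] PC]]]] vT vx.
case: (boolP (v \in VS C)) => vC.
  by rewrite -(circuit_deg cC vC) deg_subset ?subsetUr.
move: vT; rewrite VSU inE (negbTE vC) orbF => vP.
case: PC => [[P0 _]|[[_ [_ [_ [_ dP]]]] /setI_eq_set1[_ yC _]]].
  by move: vP; rewrite P0 VS0 inE.
have vy : v != y by apply: contraNneq vC => ->.
by rewrite -(dP v vP vx vy) deg_subset ?subsetUl.
Qed.

Lemma barbell_deg Bb v : barbell Bb -> v \in VS Bb -> 2 <= deg Bb v.
Proof.
case=> C1 [C2 [P [-> [[c1 _] [[c2 _] [_ hP]]]]]] vB.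
case: (boolP (v \in VS C1)) => v1.
  by rewrite -(circuit_deg c1 v1) deg_subset // -setUA subsetUl.
case: (boolP (v \in VS C2)) => v2.
  by rewrite -(circuit_deg c2 v2) deg_subset // setUAC subsetUr.
move: vB; rewrite !VSU !in_setU (negbTE v1) (negbTE v2) /= => vP.
case: hP => [[P0 _]|[_ [u [u' [u1 [u2 [[_ [_ [_ [_ dP]]]] _]]]]]]].
  by move: vP; rewrite P0 VS0 inE.
have vu : v != u by apply: contraNneq v1 => ->.
have vu' : v != u' by apply: contraNneq v2 => ->.
by rewrite -(dP v vP vu vu') deg_subset ?subsetUr.
Qed.

Lemma signed_circuit_deg C v : signed_circuit C -> v \in VS C -> 2 <= deg C v.
Proof. by case=> [[cC _] vC|bC]; [rewrite (circuit_deg cC vC) | exact: barbell_deg]. Qed.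

Lemma tadpole_notin_leaf x T S v :
  tadpole x T -> T \subset S -> deg S v <= 1 -> v != x -> v \notin VS T.
Proof.
move=> xT TS dv vx; apply/negP => vT.
have := leq_trans (tadpole_deg xT vT vx) (deg_subset v TS).
by rewrite leqNgt ltnS (leq_trans dv).
Qed.

Lemma tadpoleP x T : tadpole x T <-> exists y P C,
  [/\ T = P :|: C, unbalanced_circuit C, y \in VS C,
      forall v, v \in VS P -> v \in VS C -> v = y &
      (P = set0 /\ y = x) \/ xypath x y P].
Proof.
split=> [[y [P [C [-> [uC hPC]]]]] | [y [P [C [-> uC yC PC hP]]]]].
  case: hPC => [[P0 [yx xC]]|[xyP /setI_eq_set1[_ yC PC]]]; exists y, P, C.
  - by split=> //; [rewrite yx | rewrite P0 VS0 => v; rewrite inE | left].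
  - by split=> //; right.
exists y, P, C; do 2!split=> //; case: hP => [[P0 yx]|xyP]; [left | right].
- by rewrite -yx.
- split=> //; apply/setI_eq_set1; split=> //; exact: xypath_memVr xyP.
Qed.

(** * Gluing at a cut vertex *)

Definition meet_at S T w : Prop :=
  [disjoint S & T] /\ forall v, v \in VS S -> v \in VS T -> v = w.

Lemma meet_atC S T w : meet_at S T w -> meet_at T S w.
Proof. by case=> dST ST; split=> [|v vT vS]; [rewrite disjoint_sym | exact: ST]. Qed.

Lemma meet_at_subset S T S' T' w :
  S' \subset S -> T' \subset T -> meet_at S T w -> meet_at S' T' w.
Proof.
move=> sS sT [dST ST]; split; first exact: disjointW dST.
by move=> v /(mem_VS_subset sS) vS /(mem_VS_subset sT); apply: ST.
Qed.

Lemma xypath_setU P Q a w b :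
  meet_at P Q w -> xypath a w P -> xypath w b Q -> xypath a b (P :|: Q).
Proof.
move=> [dPQ PQ] hP hQ.
have aQ : a \notin VS Q.
  by apply/negP => /(PQ _ (xypath_memVl hP)) aw; move: (xypath_neq hP); rewrite aw eqxx.
have bP : b \notin VS P.
  by apply/negP => /PQ /(_ (xypath_memVr hQ)) bw; move: (xypath_neq hQ); rewrite bw eqxx.
case: (hP) => aw [cP [da [dw dP]]]; case: (hQ) => wb [cQ [dw' [db dQ]]].
split; first by apply: contraNneq aQ => ->; exact: xypath_memVr hQ.
split; first exact: connected_setU cP cQ (xypath_memVr hP) (xypath_memVl hQ).
rewrite !deg_setU // (deg_notin aQ) (deg_notin bP) da db.
split=> //; split=> // v; rewrite VSU inE deg_setU // => vPQ va vb.
case: (eqVneq v w) => [->|vw]; first by rewrite dw dw'.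
case/orP: vPQ => [vP|vQ].
- have vQ : v \notin VS Q by apply: contra vw => /(PQ _ vP)->.
  by rewrite (deg_notin vQ) addn0 dP.
- have vP : v \notin VS P by apply: contra vw => /PQ /(_ vQ)->.
  by rewrite (deg_notin vP) dQ.
Qed.

Lemma tadpole_setU T Q w b : meet_at T Q w -> tadpole w T -> xypath w b Q ->
  tadpole b (T :|: Q).
Proof.
move=> TQ /tadpoleP[y [P [C [eT uC yC PC hP]]]] hQ; subst T; apply/tadpoleP.
have [[_ CQ] PQ] : meet_at C Q w /\ meet_at P Q w.
  by split; apply: (meet_at_subset _ _ TQ); rewrite ?subsetUl ?subsetUr ?subxx.
exists y, (Q :|: P), C; split=> //; first by rewrite setUAC (setUC P).
  move=> v; rewrite VSU inE => /orP[vQ vC|]; last exact: PC.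
  have vw := CQ v vC vQ; subst v; case: hP => [[_ ->] //|wyP].
  by move: (xypath_neq wyP); rewrite (PC w (xypath_memVl wyP) vC) eqxx.
right; case: hP => [[-> ->]|wyP]; first by rewrite setU0; exact: xypath_sym.
exact: xypath_setU (meet_atC PQ) (xypath_sym hQ) wyP.
Qed.

Lemma tadpole_path_trivial P C w y :
  (forall v, v \in VS P -> v \in VS C -> v = y) -> (P = set0 /\ y = w) \/ xypath w y P ->
  (y == w) = (P == set0) /\ (w \in VS C -> y = w).
Proof.
move=> PC [[-> ->]|wyP]; first by rewrite !eqxx.
have yw : y != w by rewrite eq_sym; exact: xypath_neq wyP.
split; last by move/(PC w (xypath_memVl wyP)) => wy; rewrite wy eqxx in yw.
rewrite (negbTE yw); apply/esym/set0Pn; case/VSP: (xypath_memVl wyP) => e eP _.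
by exists e.
Qed.

Lemma barbell_setU T1 T2 w : meet_at T1 T2 w -> tadpole w T1 -> tadpole w T2 ->
  barbell (T1 :|: T2).
Proof.
move=> T12 /tadpoleP[y1 [P1 [C1 [eT1 uC1 yC1 PC1 hP1]]]].
move=> /tadpoleP[y2 [P2 [C2 [eT2 uC2 yC2 PC2 hP2]]]]; subst T1 T2.
have [[dC CC] PP [_ PC] [_ CP]] :
    [/\ meet_at C1 C2 w, meet_at P1 P2 w, meet_at P1 C2 w & meet_at C1 P2 w].
  by split; apply: (meet_at_subset _ _ T12); rewrite ?subsetUl ?subsetUr.
have [[y1w stem1] [y2w stem2]] := (tadpole_path_trivial PC1 hP1, tadpole_path_trivial PC2 hP2).
exists C1, C2, (P1 :|: P2); split; first by rewrite setUACA setUC.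
do 3!split=> //.
case: (boolP ((P1 == set0) && (P2 == set0))) => [/andP[/eqP P10 /eqP P20]|nontriv].
  left; split; first by rewrite P10 P20 setU0.
  have [/eqP y1w' /eqP y2w'] : y1 == w /\ y2 == w by rewrite y1w y2w P10 P20 !eqxx.
  rewrite (_ : _ :&: _ = [set w]) ?cards1 //.
  by apply/setI_eq_set1; split=> //; [rewrite -y1w' | rewrite -y2w'].
have path12 : xypath y1 y2 (P1 :|: P2).
  case: hP1 hP2 nontriv => [[-> ->]|wyP1] [[-> ->]|wyP2].
  - by rewrite eqxx.
  - by rewrite set0U.
  - by rewrite setU0 => _; exact: xypath_sym.
  - by move=> _; apply: xypath_setU PP (xypath_sym wyP1) wyP2.
right; split.
  apply/setP => v; rewrite in_setI in_set0; apply/negbTE/andP => -[vC1 vC2].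
  have vw := CC v vC1 vC2; subst v; move: nontriv.
  by rewrite -y1w -y2w (stem1 vC1) (stem2 vC2) eqxx.
exists y1, y2; do 3!split=> //.
apply/setP => v; rewrite inE in_set2 VSU !in_setU; apply/idP/idP.
- case/andP => /orP[] vP /orP[] vC.
  + by rewrite (PC1 v vP vC) eqxx.
  + by rewrite (PC v vP vC) -(stem2 _) ?eqxx ?orbT // -(PC v vP vC).
  + by rewrite (CP v vC vP) -(stem1 _) ?eqxx // -(CP v vC vP).
  + by rewrite (PC2 v vP vC) eqxx orbT.
- move: (xypath_memVl path12) (xypath_memVr path12); rewrite VSU !in_setU.
  by move=> h1 h2 /orP[] /eqP->; rewrite ?h1 ?h2 ?yC1 ?yC2 ?orbT.
Qed.

(** * Psi(2)-covers *)

Lemma in_setU_notinr e X Y : e \notin Y -> (e \in X :|: Y) = (e \in X).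
Proof. by move=> eY; rewrite in_setU (negbTE eY) orbF. Qed.

Lemma in_setU_notinl e X Y : e \notin X -> (e \in X :|: Y) = (e \in Y).
Proof. by move=> eX; rewrite in_setU (negbTE eX). Qed.

Definition cover_mult e (s : seq {set E}) : nat := count (fun S => e \in S) s.

Lemma cover_mult_cat e s1 s2 :
  cover_mult e (s1 ++ s2) = cover_mult e s1 + cover_mult e s2.
Proof. exact: count_cat. Qed.

Lemma cover_mult_map e (g : {set E} -> {set E}) s :
  (forall S, (e \in g S) = (e \in S)) -> cover_mult e (map g s) = cover_mult e s.
Proof. by move=> eg; rewrite /cover_mult count_map; apply: eq_count => S /=. Qed.

Lemma cover_mult_setU_mem e B s :
  e \in B -> cover_mult e (map (fun S => S :|: B) s) = size s.
Proof.
move=> eB; rewrite /cover_mult count_map -(count_predT s).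
by apply: eq_count => S /=; rewrite inE eB orbT.
Qed.

Lemma cover_mult_eq0 e s : (forall S, S \in s -> e \notin S) -> cover_mult e s = 0.
Proof. by move=> eS; apply/eqP; rewrite -leqn0 leqNgt -has_count; apply/hasPn. Qed.

Lemma psi_cover_sub EH a b t Pp Pn Tx Ty Cs S : psi_cover EH a b t Pp Pn Tx Ty Cs ->
  S \in Pp ++ Pn ++ Tx ++ Ty ++ Cs -> S \subset EH.
Proof. by case=> _ [_ [_ [_ [_ [sub _]]]]]; apply: sub. Qed.

Lemma psi_cover_mult EH a b t Pp Pn Tx Ty Cs e : psi_cover EH a b t Pp Pn Tx Ty Cs ->
  e \in EH -> cover_mult e (Pp ++ Pn ++ Ty) + cover_mult e (Tx ++ Cs) = 6.
Proof.
case=> _ [_ [_ [_ [_ [_ [_ [_ [_ [_ [_ mult6]]]]]]]]]] /mult6.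
by rewrite -!/(cover_mult _ _) !cover_mult_cat; lia.
Qed.

Lemma psi_coverC EH a b Pp Pn Tx Ty Cs : psi_cover EH a b 2 Pp Pn Tx Ty Cs ->
  psi_cover EH b a 2 Pp Pn Ty Tx Cs.
Proof.
move=> K; case: (K) => t3 [sp [sn [sx [sy [_ [hp [hn [hx [hy [hc mult6]]]]]]]]]].
split=> //; split=> //; split=> //; split; first by rewrite sy.
split; first by rewrite sx.
split; first by move=> S S_in; apply: (psi_cover_sub K); move: S_in; rewrite !mem_cat;
  case: (S \in Tx); case: (S \in Ty); rewrite ?orbT.
split; first by move=> P /hp[/xypath_sym].
split; first by move=> P /hn[/xypath_sym].
do 3!split=> //.
by move=> e /mult6; rewrite -!/(cover_mult _ _) !cover_mult_cat; lia.
Qed.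

Definition psi2_cover_avoiding (EH : {set E}) (a b : V) : Prop :=
  exists Pp Pn Tx Ty Cs, psi_cover EH a b 2 Pp Pn Tx Ty Cs /\
    (forall T, T \in Tx -> b \notin VS T) /\ (forall T, T \in Ty -> a \notin VS T).

Definition psi2_cover_avoiding_at_target (EH : {set E}) (a b : V) : Prop :=
  exists Pp Pn Tx Ty Cs, psi_cover EH a b 2 Pp Pn Tx Ty Cs /\
    (forall T, T \in Ty -> a \notin VS T).

Lemma psi2_cover_avoidingC EH a b : psi2_cover_avoiding EH a b -> psi2_cover_avoiding EH b a.
Proof.
by case=> Pp [Pn [Tx [Ty [Cs [/psi_coverC K [avoidX avoidY]]]]]]; exists Pp, Pn, Ty, Tx, Cs.
Qed.

Lemma psi2_cover_avoiding_at_targetP EH a b : ~ psi2_cover_avoiding_at_target EH a b <->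
  forall Pp Pn Tx Ty Cs, psi_cover EH a b 2 Pp Pn Tx Ty Cs -> exists T, T \in Ty /\ a \in VS T.
Proof.
split=> [notA Pp Pn Tx Ty Cs K | allT [Pp [Pn [Tx [Ty [Cs [K avoid]]]]]]].
  apply: NNPP => noT; apply: notA; exists Pp, Pn, Tx, Ty, Cs; split=> // T T_in.
  by apply/negP => aT; apply: noT; exists T.
by have [T [T_in aT]] := allT _ _ _ _ _ K; move: (avoid T T_in); rewrite aT.
Qed.

Lemma psi2_cover_avoiding_at_sourceP EH a b : ~ psi2_cover_avoiding_at_target EH b a <->
  forall Pp Pn Tx Ty Cs, psi_cover EH a b 2 Pp Pn Tx Ty Cs -> exists T, T \in Tx /\ b \in VS T.
Proof.
rewrite psi2_cover_avoiding_at_targetP.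
by split=> allT Pp Pn Tx Ty Cs /psi_coverC; apply: allT.
Qed.

(* Replacing every path and every tadpole at the target [w] by its image under [f]
   gives a cover with a new target [b]; [c] records the change of sign of the
   paths, which may exchange the positive and the negative ones. *)
Lemma psi_cover_retarget (EH EH' : {set E}) a w b (f : {set E} -> {set E}) (c : bool)
    Pp Pn Tx Ty Cs :
  psi_cover EH a w 2 Pp Pn Tx Ty Cs ->
  (forall P, P \in Pp ++ Pn -> xypath a w P ->
     xypath a b (f P) /\ negative (f P) = negative P (+) c) ->
  (forall T, T \in Ty -> tadpole b (f T)) ->
  (forall S, S \in Pp ++ Pn ++ Ty -> f S \subset EH') ->
  (forall S, S \in Tx ++ Cs -> S \subset EH') ->
  (forall e, e \in EH' ->
     cover_mult e (map f (Pp ++ Pn ++ Ty)) + cover_mult e (Tx ++ Cs) = 6) ->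
  psi_cover EH' a b 2 (map f (if c then Pn else Pp)) (map f (if c then Pp else Pn))
    Tx (map f Ty) Cs.
Proof.
case=> t3 [sp [sn [sx [sy [_ [hp [hn [hx [hy [hc _]]]]]]]]]] fP fT fsub sub mult6.
have pathP P : P \in Pp -> xypath a b (f P) /\ negative (f P) = c.
  move=> PP; have [xyP nP] := hp P PP.
  have [|? ->] := fP P _ xyP; by rewrite ?mem_cat ?PP ?(negbTE nP).
have pathN P : P \in Pn -> xypath a b (f P) /\ negative (f P) = ~~ c.
  move=> PN; have [xyP nP] := hn P PN.
  have [|? ->] := fP P _ xyP; by rewrite ?mem_cat ?PN ?orbT ?nP.
split=> //; split; first by rewrite size_map; case: (c).
split; first by rewrite size_map; case: (c).
split=> //; split; first by rewrite size_map.
split.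
  move=> S; rewrite !mem_cat => /or4P[| | S_in | S_in].
  - by case/mapP=> P P_in ->; apply: fsub; case: (c) P_in; rewrite !mem_cat => ->; rewrite ?orbT.
  - by case/mapP=> P P_in ->; apply: fsub; case: (c) P_in; rewrite !mem_cat => ->; rewrite ?orbT.
  - by apply: sub; rewrite mem_cat S_in.
  - case/orP: S_in => [|S_in]; last by apply: sub; rewrite mem_cat S_in orbT.
    by case/mapP=> T T_in ->; apply: fsub; rewrite !mem_cat T_in !orbT.
split.
  move=> _ /mapP[P P_in ->]; case: c fP P_in pathP pathN => _ P_in pathP pathN.
  - by have [? ->] := pathN P P_in.
  - by have [? ->] := pathP P P_in.
split.
  move=> _ /mapP[P P_in ->]; case: c fP P_in pathP pathN => _ P_in pathP pathN.
  - by have [? ->] := pathP P P_in.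
  - by have [? ->] := pathN P P_in.
do 2!split=> //; first by move=> _ /mapP[T /fT ? ->].
split=> // e /mult6; rewrite -!/(cover_mult _ _) !map_cat !cover_mult_cat.
by case: (c); lia.
Qed.

Lemma psi_cover_setU_xypath A B a w b Pp Pn Tx Ty Cs :
  meet_at A B w -> psi_cover A a w 2 Pp Pn Tx Ty Cs -> xypath w b B ->
  psi_cover (A :|: B) a b 2 (map (fun S => S :|: B) (if negative B then Pn else Pp))
    (map (fun S => S :|: B) (if negative B then Pp else Pn)) Tx (map (fun S => S :|: B) Ty) Cs.
Proof.
move=> AB K wbB; have sub := psi_cover_sub K.
have [dAB _] := AB.
apply: (psi_cover_retarget K).
- move=> P P_in xyP; have sPA : P \subset A.
    by apply: sub; move: P_in; rewrite !mem_cat => /orP[]->; rewrite ?orbT.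
  split; first by apply: xypath_setU xyP wbB; apply: meet_at_subset AB.
  by apply: negative_setU; apply: disjointWl dAB.
- case: K => _ [_ [_ [_ [_ [_ [_ [_ [_ [hy _]]]]]]]]] T T_in.
  apply: tadpole_setU (hy T T_in) wbB; apply: meet_at_subset AB => //.
  by apply: sub; rewrite !mem_cat T_in !orbT.
- move=> S S_in; apply: setSU; apply: sub; move: S_in; rewrite !mem_cat.
  by case/or3P=> ->; rewrite ?orbT.
- move=> S S_in; apply: subset_trans (subsetUl A B); apply: sub; move: S_in.
  by rewrite !mem_cat => /orP[]->; rewrite ?orbT.
move=> e; rewrite in_setU => /orP[eA | eB].
- have eB : e \notin B by rewrite (disjointFr dAB eA).
  rewrite cover_mult_map => [|S]; first exact: psi_cover_mult K eA.
  exact: in_setU_notinr.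
- case: K => _ [sp [sn [_ [sy _]]]].
  rewrite cover_mult_setU_mem // !size_cat sp sn sy cover_mult_eq0 // => S S_in.
  have /subsetP SA : S \subset A.
    by apply: sub; move: S_in; rewrite !mem_cat => /orP[]->; rewrite ?orbT.
  by apply: contraL eB => /SA eA; rewrite (disjointFr dAB eA).
Qed.

Lemma size2P (s : seq {set E}) : size s = 2 -> exists X Y, s = [:: X; Y].
Proof. by case: s => [|X [|Y []]] // _; exists X, Y. Qed.

Lemma cover_mult2_setUr e X1 X2 Y1 Y2 : e \notin Y1 -> e \notin Y2 ->
  cover_mult e [:: X1 :|: Y1; X2 :|: Y2] = cover_mult e [:: X1; X2].
Proof. by move=> eY1 eY2; rewrite /cover_mult /= !in_setU_notinr. Qed.

Lemma cover_mult2_setUl e X1 X2 Y1 Y2 : e \notin X1 -> e \notin X2 ->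
  cover_mult e [:: X1 :|: Y1; X2 :|: Y2] = cover_mult e [:: Y1; Y2].
Proof. by move=> eX1 eX2; rewrite /cover_mult /= !in_setU_notinl. Qed.

Lemma cover_mult2C e X1 X2 : cover_mult e [:: X1; X2] = cover_mult e [:: X2; X1].
Proof. by rewrite /cover_mult /= !addn0 addnC. Qed.

Lemma cover_mult2_transpose e X1 X2 X3 X4 :
  cover_mult e [:: X1; X2] + cover_mult e [:: X3; X4] =
  cover_mult e [:: X1; X3] + cover_mult e [:: X2; X4].
Proof. by rewrite /cover_mult /= !addn0 addnACA. Qed.

Lemma cover_mult_glue_left e p1 p2 n1 n2 t1 t2 q1 q2 r1 r2 s1 s2 Tx Cs1 Ty Cs2 :
  (forall Y, Y \in [:: q1; q2] ++ [:: r1; r2] ++ [:: s1; s2] ++ Ty ++ Cs2 -> e \notin Y) ->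
  cover_mult e ([:: p1 :|: q1; n1 :|: r1] ++ [:: p2 :|: r2; n2 :|: q2] ++ Tx ++ Ty ++
                ([:: t1 :|: s1; t2 :|: s2] ++ Cs1 ++ Cs2)) =
  cover_mult e ([:: p1; p2] ++ [:: n1; n2] ++ Tx ++ [:: t1; t2] ++ Cs1).
Proof.
move=> eY; rewrite !cover_mult_cat !cover_mult2_setUr;
  try by apply: eY; rewrite !(mem_cat, inE) eqxx ?orbT.
rewrite !(@cover_mult_eq0 e Ty) ?(@cover_mult_eq0 e Cs2) => [|S S_in|S S_in]; last 2 first.
- by apply: eY; rewrite !mem_cat S_in ?orbT.
- by apply: eY; rewrite !mem_cat S_in ?orbT.
by rewrite add0n addn0 addnA -cover_mult2_transpose -addnA.
Qed.

Lemma cover_mult_glue_right e p1 p2 n1 n2 t1 t2 q1 q2 r1 r2 s1 s2 Tx Cs1 Ty Cs2 :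
  (forall X, X \in [:: p1; p2] ++ [:: n1; n2] ++ Tx ++ [:: t1; t2] ++ Cs1 -> e \notin X) ->
  cover_mult e ([:: p1 :|: q1; n1 :|: r1] ++ [:: p2 :|: r2; n2 :|: q2] ++ Tx ++ Ty ++
                ([:: t1 :|: s1; t2 :|: s2] ++ Cs1 ++ Cs2)) =
  cover_mult e ([:: q1; q2] ++ [:: r1; r2] ++ [:: s1; s2] ++ Ty ++ Cs2).
Proof.
move=> eX; rewrite !cover_mult_cat !cover_mult2_setUl;
  try by apply: eX; rewrite !(mem_cat, inE) eqxx ?orbT.
rewrite !(@cover_mult_eq0 e Tx) ?(@cover_mult_eq0 e Cs1) => [|S S_in|S S_in]; last 2 first.
- by apply: eX; rewrite !mem_cat S_in ?orbT.
- by apply: eX; rewrite !mem_cat S_in ?orbT.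
rewrite (cover_mult2C _ r2) addnA cover_mult2_transpose.
by rewrite !add0n [RHS]addnA (addnCA (cover_mult e Ty)).
Qed.

(* Two covers glued at [w]: each path on one side is continued by a path on the
   other side of the sign that makes the union positive or negative as needed,
   and each tadpole at [w] on one side closes up with one on the other side into
   a barbell. *)
Lemma psi_cover_setU2 A B a w b p1 p2 n1 n2 t1 t2 q1 q2 r1 r2 s1 s2 Tx Cs1 Ty Cs2 :
  meet_at A B w ->
  psi_cover A a w 2 [:: p1; p2] [:: n1; n2] Tx [:: t1; t2] Cs1 ->
  psi_cover B w b 2 [:: q1; q2] [:: r1; r2] [:: s1; s2] Ty Cs2 ->
  psi_cover (A :|: B) a b 2 [:: p1 :|: q1; n1 :|: r1] [:: p2 :|: r2; n2 :|: q2] Tx Ty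
    ([:: t1 :|: s1; t2 :|: s2] ++ Cs1 ++ Cs2).
Proof.
move=> AB K1 K2; have [dAB _] := AB.
have sub1 := psi_cover_sub K1; have sub2 := psi_cover_sub K2.
have [p1A p2A n1A n2A] : [/\ p1 \subset A, p2 \subset A, n1 \subset A & n2 \subset A].
  by split; apply: sub1; rewrite !(mem_cat, inE) eqxx ?orbT.
have [q1B q2B r1B r2B] : [/\ q1 \subset B, q2 \subset B, r1 \subset B & r2 \subset B].
  by split; apply: sub2; rewrite !(mem_cat, inE) eqxx ?orbT.
have [[t1A t2A] [s1B s2B]] : (t1 \subset A /\ t2 \subset A) /\ (s1 \subset B /\ s2 \subset B).
  by do !split; [apply: sub1 | apply: sub1 | apply: sub2 | apply: sub2];
    rewrite !(mem_cat, inE) eqxx ?orbT.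
case: K1 => _ [_ [_ [sx [_ [_ [hp1 [hn1 [hx1 [hy1 [hc1 mult1]]]]]]]]]].
case: K2 => _ [_ [_ [_ [sy [_ [hp2 [hn2 [hx2 [hy2 [hc2 mult2]]]]]]]]]].
have [[ap1 np1] [ap2 np2]] := (hp1 p1 (mem_head _ _), hp1 p2 (mem_last p1 [:: p2])).
have [[an1 nn1] [an2 nn2]] := (hn1 n1 (mem_head _ _), hn1 n2 (mem_last n1 [:: n2])).
have [[bq1 nq1] [bq2 nq2]] := (hp2 q1 (mem_head _ _), hp2 q2 (mem_last q1 [:: q2])).
have [[br1 nr1] [br2 nr2]] := (hn2 r1 (mem_head _ _), hn2 r2 (mem_last r1 [:: r2])).
have glue X Y : X \subset A -> Y \subset B -> xypath a w X -> xypath w b Y ->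
    xypath a b (X :|: Y) /\ negative (X :|: Y) = negative X (+) negative Y.
  move=> XA YB aX bY; have [dXY XY] := meet_at_subset XA YB AB.
  by split; [apply: xypath_setU aX bY | apply: negative_setU].
split=> //; split=> //; split=> //; split=> //; split; first by rewrite sy.
split.
  move=> S; rewrite !(mem_cat, inE) => /or4P[/orP[]/eqP-> | /orP[]/eqP-> | S1 |
    /or3P[S2 | /orP[]/eqP-> | /orP[S1 | S2]]];
  by [ apply: setUSS
     | apply: subset_trans (subsetUl A B); apply: sub1; rewrite !mem_cat S1 ?orbT
     | apply: subset_trans (subsetUr A B); apply: sub2; rewrite !mem_cat S2 ?orbT ].
split.
  move=> P; rewrite !inE => /orP[]/eqP->.
  - by have [? ->] := glue _ _ p1A q1B ap1 bq1; rewrite (negbTE np1) (negbTE nq1).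
  - by have [? ->] := glue _ _ n1A r1B an1 br1; rewrite nn1 nr1.
split.
  move=> P; rewrite !inE => /orP[]/eqP->.
  - by have [? ->] := glue _ _ p2A r2B ap2 br2; rewrite (negbTE np2) nr2.
  - by have [? ->] := glue _ _ n2A q2B an2 bq2; rewrite nn2 (negbTE nq2).
do 2!split=> //.
split.
  move=> C; rewrite !(mem_cat, inE) => /or3P[/orP[]/eqP-> | /hc1 | /hc2] //; right;
    apply: barbell_setU (hy1 _ _) (hx2 _ _);
    by [apply: meet_at_subset AB | rewrite !inE eqxx ?orbT].
move=> e; rewrite in_setU => /orP[eA | eB].
- rewrite -/(cover_mult e _) cover_mult_glue_left => [|Y /sub2 /subsetP YB]; first exact: mult1.
  by apply: contraL eA => /YB eB; rewrite (disjointFl dAB eB).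
- rewrite -/(cover_mult e _) cover_mult_glue_right => [|X /sub1 /subsetP XA]; first exact: mult2.
  by apply: contraL eB => /XA eA; rewrite (disjointFr dAB eA).
Qed.

Lemma psi_cover_setU A B a w b Pp1 Pn1 Tx1 Ty1 Cs1 Pp2 Pn2 Tx2 Ty2 Cs2 :
  meet_at A B w -> psi_cover A a w 2 Pp1 Pn1 Tx1 Ty1 Cs1 ->
  psi_cover B w b 2 Pp2 Pn2 Tx2 Ty2 Cs2 ->
  exists Pp Pn Cs, psi_cover (A :|: B) a b 2 Pp Pn Tx1 Ty2 Cs.
Proof.
move=> AB K1 K2; move: (K1) (K2).
case: K1 => _ [/size2P[p1 [p2 ->]] [/size2P[n1 [n2 ->]] [_ [/size2P[t1 [t2 ->]] _]]]].
case: K2 => _ [/size2P[q1 [q2 ->]] [/size2P[r1 [r2 ->]] [/size2P[s1 [s2 ->]] _]]].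
by move=> K1 K2; do 3!eexists; apply: psi_cover_setU2 AB K1 K2.
Qed.

(** * Removing a pendant edge *)

Section PendantEdge.
Variables (A : {set E}) (e : E) (s t : V).
Hypotheses (eA : e \notin A) (st : s != t) (se : incident s e) (te : incident t e)
  (tA : t \notin VS A).

Lemma ends_mult_pendant v : ends_mult e v = (v == s) + (v == t).
Proof.
move: se te (st); rewrite /incident /ends_mult => /orP[]/eqP e1 /orP[]/eqP e2;
  rewrite -?e1 -?e2 ?eqxx // => _; rewrite !(eq_sym _ v); by [|rewrite addnC].
Qed.

Lemma incident_pendant v : incident v e = (v == s) || (v == t).
Proof. by rewrite -ends_mult_gt0 ends_mult_pendant; case: (v == s); case: (v == t). Qed.

Lemma deg_setD1_pendant P v : e \in P -> deg (P :\ e) v = deg P v - ((v == s) + (v == t)).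
Proof. by move=> eP; rewrite (deg_setD1 _ eP) ends_mult_pendant addnK. Qed.

Lemma subset_pendant S : S \subset A :|: [set e] ->
  (t \in VS S -> 2 <= deg S t) -> S \subset A.
Proof.
move=> sS deg2; apply/subsetP => f fS; move: (subsetP sS f fS); rewrite !inE.
case/orP=> // /eqP fe; subst f; have tS : t \in VS S by apply/VSP; exists e.
have := deg_subset t sS; rewrite deg_setU ?deg_set1 ?ends_mult_pendant; last first.
  by rewrite disjoint_sym disjoints1.
by rewrite (deg_notin tA) eqxx eq_sym (negbTE st); move: (deg2 tS); lia.
Qed.

Lemma connect_pendant P u v : e \in P -> t \notin VS (P :\ e) ->
  connect (adj P) u v -> connect (adj (P :\ e))
    (if u \in VS (P :\ e) then u else s) (if v \in VS (P :\ e) then v else s).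
Proof.
move=> eP tP; apply: connect_contract; first exact: subD1set.
move=> f; rewrite !inE => /andP[fPe fP] z.
have -> : f = e by apply/eqP; move: fPe; rewrite fP andbT negbK.
by rewrite incident_pendant => /orP[/eqP->|/eqP-> /(negP tP)].
Qed.

Lemma pendant_in_xypath x P : xypath x t P -> P \subset A :|: [set e] -> e \in P.
Proof.
move=> xtP PG; case/VSP: (xypath_memVr xtP) => f fP tf; move: (subsetP PG f fP).
by rewrite !inE => /orP[fA|/eqP<- //]; case/negP: tA; apply/VSP; exists f.
Qed.

Lemma xypath_pendant x P : xypath x t P -> P \subset A :|: [set e] -> x != s ->
  [/\ e \in P, xypath x s (P :\ e) & negative P = negative (P :\ e) (+) neg e].
Proof.
move=> xtP PG xs; have xt := xypath_neq xtP.
have eP := pendant_in_xypath xtP PG.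
have degP v : deg (P :\ e) v = deg P v - ((v == s) + (v == t)) by apply: deg_setD1_pendant.
split=> //; last by rewrite -{1}(setD1K eP) negative_setU ?negative_set1 1?addbC //
  disjoints1 setD11.
case: xtP => _ [[_ cP] [dx [dt dP]]].
have tP' : t \notin VS (P :\ e) by rewrite -deg_gt0 degP dt eqxx eq_sym (negbTE st).
have sP : s \in VS P by apply/VSP; exists e.
have ds : deg (P :\ e) s = 1.
  by rewrite degP (dP s sP _ st) ?eqxx ?(negbTE st) // eq_sym.
split=> //; split.
  have sP' : s \in VS (P :\ e) by rewrite -deg_gt0 ds.
  split; first by apply/set0Pn; case/VSP: sP' => f fP _; exists f.
  move=> u v uP vP; have sub := mem_VS_subset (subD1set P e).
  by have := connect_pendant eP tP' (cP u v (sub _ uP) (sub _ vP)); rewrite uP vP.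
split; first by rewrite degP dx (negbTE xs) (negbTE xt).
split=> // v vP' vx vs; have vt : v != t by apply: contraNneq tP' => <-.
have vP := mem_VS_subset (subD1set P e) vP'.
by rewrite degP dP // (negbTE vs) (negbTE vt).
Qed.

Lemma xypath_pendant_edge P : xypath t s P -> P \subset A :|: [set e] -> P :\ e = set0.
Proof.
move=> tsP PG; have eP := pendant_in_xypath (xypath_sym tsP) PG.
case: tsP => _ [[_ cP] [dt [ds _]]].
have [tP' sP'] : t \notin VS (P :\ e) /\ s \notin VS (P :\ e).
  by rewrite -!deg_gt0 !deg_setD1_pendant // dt ds !eqxx eq_sym (negbTE st).
apply/eqP/negPn/negP => /set0Pn[f fP']; set u := (ends f).1.
have uP' : u \in VS (P :\ e) by apply/VSP; exists f; rewrite // /incident eqxx.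
have tP : t \in VS P by rewrite -deg_gt0 dt.
have := connect_pendant eP tP' (cP u t (mem_VS_subset (subD1set P e) uP') tP).
rewrite uP' (negbTE tP') connect_adj_sym => /connect_memVS.
have su : s != u by apply: contraNneq sP' => ->.
by move/(_ su); apply/negP.
Qed.

Lemma tadpole_pendant T : tadpole t T -> T \subset A :|: [set e] -> tadpole s (T :\ e).
Proof.
move=> /tadpoleP[y [P [C [eT uC yC PC hP]]]] TG; subst T; apply/tadpoleP.
have [PG CG] := (subset_trans (subsetUl P C) TG, subset_trans (subsetUr P C) TG).
have CA : C \subset A by apply: subset_pendant CG _ => tC; rewrite (circuit_deg uC.1 tC).
have tC : t \notin VS C by apply: contra tA; apply: mem_VS_subset CA.
have tyP : xypath t y P by case: hP => [[_ yt]|//]; rewrite -yt yC in tC.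
have -> : (P :|: C) :\ e = (P :\ e) :|: C.
  rewrite setDUl (@setDidPl _ C [set e] _) // disjoint_sym disjoints1.
  by apply: contra eA; apply: (subsetP CA).
case: (eqVneq y s) => [ys|ys].
  subst y; exists s, set0, C; rewrite (xypath_pendant_edge tyP PG) set0U VS0.
  by split=> // [v|]; [rewrite inE | left].
have [_ ysP _] := xypath_pendant (xypath_sym tyP) PG ys.
exists y, (P :\ e), C; split=> //; last by right; exact: xypath_sym.
by move=> v /(mem_VS_subset (subD1set P e)); exact: PC.
Qed.

Lemma psi_cover_pendant x Pp Pn Tx Ty Cs : x != s ->
  psi_cover (A :|: [set e]) x t 2 Pp Pn Tx Ty Cs ->
  (forall T, T \in Tx -> t \notin VS T) ->
  psi_cover A x s 2 (map (fun S => S :\ e) (if neg e then Pn else Pp))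
    (map (fun S => S :\ e) (if neg e then Pp else Pn)) Tx (map (fun S => S :\ e) Ty) Cs.
Proof.
move=> xs K tTx; have sub := psi_cover_sub K.
have cutA S : S \subset A :|: [set e] -> S :\ e \subset A by rewrite subDset setUC.
apply: (psi_cover_retarget K).
- move=> P P_in xtP; have PG : P \subset A :|: [set e].
    by apply: sub; move: P_in; rewrite !mem_cat => /orP[]->; rewrite ?orbT.
  by have [_ ? ->] := xypath_pendant xtP PG xs; rewrite addbK.
- case: K => _ [_ [_ [_ [_ [_ [_ [_ [_ [hy _]]]]]]]]] T T_in.
  by apply: tadpole_pendant (hy T T_in) _; apply: sub; rewrite !mem_cat T_in !orbT.
- move=> S S_in; apply: cutA; apply: sub; move: S_in; rewrite !mem_cat.
  by case/or3P=> ->; rewrite ?orbT.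
- case: K => _ [_ [_ [_ [_ [_ [_ [_ [_ [_ [hc _]]]]]]]]]] S; rewrite mem_cat => /orP[]S_in.
  + apply: subset_pendant => [|/(negP (tTx S S_in))//].
    by apply: sub; rewrite !mem_cat S_in !orbT.
  + apply: subset_pendant => [|tS]; last exact: signed_circuit_deg (hc S S_in) tS.
    by apply: sub; rewrite !mem_cat S_in !orbT.
move=> f fA; have fe : f != e by apply: contraNneq eA => <-.
rewrite cover_mult_map => [|S]; last by rewrite !inE fe.
by apply: (psi_cover_mult K); rewrite inE fA.
Qed.

End PendantEdge.
End SignedGraphFacts.

Section SeriesConnection.
Variables (V E : finType) (ends : E -> V * V) (neg : E -> bool).
Local Notation VS := (VS ends).
Local Notation deg := (deg ends).
Local Notation connected := (connected ends).
Local Notation xypath := (xypath ends).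
Local Notation psi_cover := (psi_cover ends neg).
Variables (n : nat) (x : nat -> V) (p : E -> nat).
Hypothesis decomp : series_decomp ends neg (x 0) (x n) n x p.
Hypothesis noB0 : forall i, i < n -> ~ single_neg_loop ends neg (part p i).

Definition prefix k : {set E} := [set e | p e < k].

Lemma prefix0 : prefix 0 = set0.
Proof. by apply/setP => e; rewrite !inE. Qed.

Lemma prefixS k : prefix k.+1 = prefix k :|: part p k.
Proof. by apply/setP => e; rewrite !inE ltnS leq_eqVlt orbC. Qed.

Lemma prefix_all : prefix n = [set: E].
Proof. by case: decomp => _ [_ [pn _]]; apply/setP => e; rewrite !inE pn. Qed.

Lemma part_terminals i : i < n -> [/\ connected (part p i), x i \in VS (part p i),
  x i.+1 \in VS (part p i) & x i != x i.+1].
Proof.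
case: decomp => _ [_ [_ [parts _]]] ilt; have [? [? [? loop]]] := parts i ilt.
by split=> //; apply/eqP => /loop; apply: noB0.
Qed.

Lemma parts_meet i j v : i < j -> j < n -> v \in VS (part p i) -> v \in VS (part p j) ->
  j = i.+1 /\ v = x j.
Proof.
case: decomp => _ [_ [_ [_ shared]]] ij jn vi vj.
have vx k : i < k <= j -> v = x k by apply: (shared i j v ij jn).1.
split; last by apply: vx; rewrite ij leqnn.
apply/eqP; rewrite eqn_leq ij andbT leqNgt; apply/negP => ij2.
have [_ _ _] := part_terminals (ltn_trans ij2 jn).
by rewrite -(vx i.+1) -?(vx i.+2) ?eqxx //; apply/andP; split => //; apply: ltnW.
Qed.

Lemma prefix_part_disjoint k : [disjoint prefix k & part p k].
Proof.
rewrite -setI_eq0; apply/eqP/setP => e; rewrite !inE.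
by case: (eqVneq (p e) k) => [->|]; rewrite ?ltnn ?andbF.
Qed.

Lemma mem_VS_prefix k v : v \in VS (prefix k) -> exists2 i, i < k & v \in VS (part p i).
Proof.
case/VSP => e; rewrite inE => ek ve; exists (p e) => //.
by apply/VSP; exists e; rewrite ?inE.
Qed.

Lemma meet_at_prefix k : 0 < k -> k < n -> meet_at ends (prefix k) (part p k) (x k).
Proof.
move=> k0 kn; split=> [|v /mem_VS_prefix[i ik vi] vk]; first exact: prefix_part_disjoint.
by have [_ ->] := parts_meet ik kn vi vk.
Qed.

Lemma next_terminal_notin_prefix k : k < n -> x k.+1 \notin VS (prefix k).
Proof.
case: k => [|k] kn; first by rewrite prefix0 VS0 inE.
have [_ _ xk1 xkk1] := part_terminals kn.
by apply: contra xkk1 => /(meet_at_prefix (ltn0Sn k) kn).2 /(_ xk1) ->.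
Qed.

Lemma source_notin_part k : 0 < k -> k < n -> x 0 \notin VS (part p k).
Proof.
move=> k0 kn; have [_ x0 _ x01] := part_terminals (ltn_trans k0 kn).
by apply/negP => /(parts_meet k0 kn x0) [k1 x0k]; subst k; rewrite x0k eqxx in x01.
Qed.

Lemma target_notin_part k : k < n.-1 -> x n \notin VS (part p k).
Proof.
move=> kn; have n1 : n.-1 < n by rewrite prednK ?leqnn //; case: (n) kn.
have [_ _ xn xn1n] := part_terminals n1; rewrite prednK ?(leq_trans _ n1) // in xn xn1n.
by apply/negP => /(parts_meet kn n1) /(_ xn) [_ xnn1]; rewrite xnn1 eqxx in xn1n.
Qed.

Lemma target_notin_prefix k : k <= n.-1 -> x n \notin VS (prefix k).
Proof.
move=> kn; apply/negP => /mem_VS_prefix[i ik].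
by apply/negP; apply: target_notin_part; apply: leq_trans ik kn.
Qed.

Lemma part_edge i : i < n -> ~ inB2 x p i -> exists e, part p i = [set e].
Proof.
move=> ilt notB2; have [[part0 _] _ _ xx] := part_terminals ilt.
apply/cards1P; rewrite eqn_leq card_gt0 part0 andbT leqNgt.
by apply/negP => two; apply: notB2.
Qed.

Lemma xypath_part i : i < n -> ~ inB2 x p i -> xypath (x i) (x i.+1) (part p i).
Proof.
move=> ilt notB2; have [e pe] := part_edge ilt notB2.
have [_ xi xi1 xx] := part_terminals ilt; rewrite pe in xi xi1 *.
exact: xypath_set1.
Qed.

Lemma deg_prefix_terminal j : 1 < j -> j <= n -> ~ inB2 x p j.-1 -> deg (prefix j) (x j) <= 1.
Proof.
case: j => [|i] //= i1 iN notB2.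
rewrite prefixS deg_setU ?prefix_part_disjoint // (deg_notin (next_terminal_notin_prefix iN)).
have [e pe] := part_edge iN notB2; have [_ xi xi1 xx] := part_terminals iN.
rewrite pe deg_set1 in xi xi1 *; apply: ends_mult_le1.
by apply: contraNneq xx => loop; move: xi xi1; rewrite VS1 !inE loop !orbb => /eqP-> /eqP->.
Qed.

Hypothesis n2 : 1 < n.

(* While a part in B2 is still to come, the tadpoles at [x k] may pass through
   [x 0]: they end up in the barbells formed at that part. *)
Definition prefix_inv k : Prop :=
  ((forall i, i < k -> ~ inB2 x p i) /\ (k = 0 \/ xypath (x 0) (x k) (prefix k))) \/
  (0 < k /\ exists Pp Pn Tx Ty Cs, psi_cover (prefix k) (x 0) (x k) 2 Pp Pn Tx Ty Cs /\
     (forall T, T \in Tx -> x n \notin VS T) /\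
     ((forall T, T \in Ty -> x 0 \notin VS T) \/ exists2 i, k <= i < n & inB2 x p i)).

Lemma prefix_inv_edge k : k < n -> ~ inB2 x p k -> prefix_inv k -> prefix_inv k.+1.
Proof.
move=> kn notB2; have kP := xypath_part kn notB2.
case=> [[noB2 [k0|path]] | [k0 [Pp [Pn [Tx [Ty [Cs [K [avoidX avoidY]]]]]]]]].
- subst k; left; split=> [i|]; first by rewrite ltnS leqn0 => /eqP->.
  by right; rewrite prefixS prefix0 set0U.
- have k0 : 0 < k by case: (k) path => // /xypath_neq; rewrite eqxx.
  left; split=> [i|]; first by rewrite ltnS leq_eqVlt => /orP[/eqP->|/noB2].
  by right; rewrite prefixS; apply: xypath_setU (meet_at_prefix k0 kn) path kP.
right; split=> //; rewrite prefixS.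
have K' := psi_cover_setU_xypath (meet_at_prefix k0 kn) K kP.
do 5!eexists; split; first exact: K'.
split=> //; case: avoidY => [avoidY|[i /andP[ki iN] iB2]].
- left=> _ /mapP[T T_in ->]; rewrite VSU inE negb_or avoidY //.
  exact: source_notin_part.
- right; exists i => //; rewrite iN andbT ltn_neqAle ki andbT.
  by apply: contraPneq notB2 => ->.
Qed.

Section Construction.

(* Alternatives (2) and (3) fail exactly when such covers exist. *)
Hypothesis B2_cover : forall i, i < n -> inB2 x p i -> exists Pp Pn Tx Ty Cs,
  psi_cover (part p i) (x i) (x i.+1) 2 Pp Pn Tx Ty Cs /\
  ((forall j, j < n -> inB2 x p j -> j = 0) -> forall T, T \in Ty -> x 0 \notin VS T) /\
  ((forall j, j < n -> inB2 x p j -> j = n.-1) -> forall T, T \in Tx -> x n \notin VS T).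

Lemma prefix_inv_B2 k : k < n -> inB2 x p k -> prefix_inv k -> prefix_inv k.+1.
Proof.
move=> kn kB2 inv; right; split=> //.
have [Pp [Pn [Tx [Ty [Cs [K [only_first only_last]]]]]]] := B2_cover kn kB2.
have sub := psi_cover_sub K.
have avoid0 : 0 < k -> forall T, T \in Ty -> x 0 \notin VS T.
  move=> k0 T T_in; apply: contra (source_notin_part k0 kn); apply: mem_VS_subset.
  by apply: sub; rewrite !mem_cat T_in !orbT.
case: inv => [[noB2 [k0|path]] | [k0 [Pp1 [Pn1 [Tx1 [Ty1 [Cs1 [K1 [avoidX _]]]]]]]]].
- subst k; exists Pp, Pn, Tx, Ty, Cs; rewrite prefixS prefix0 set0U; split=> //; split.
    have n1 : 0 < n.-1 by rewrite -subn1 subn_gt0.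
    move=> T T_in; apply: contra (target_notin_part n1); apply: mem_VS_subset.
    by apply: sub; rewrite !mem_cat T_in !orbT.
  case: (classic (exists2 j, 0 < j < n & inB2 x p j)) => [[j /andP[j0 jn] jB2]|none].
    by right; exists j; rewrite ?j0.
  left; apply: only_first => j jn jB2; apply/eqP; rewrite -leqn0 leqNgt; apply/negP => j0.
  by apply: none; exists j; rewrite ?j0.
- have k0 : 0 < k by case: (k) path => // /xypath_neq; rewrite eqxx.
  have K' := psi_cover_setU_xypath (meet_atC (meet_at_prefix k0 kn)) (psi_coverC K)
    (xypath_sym path).
  rewrite prefixS setUC; do 5!eexists; split; first exact: psi_coverC K'.
  split; last by left; apply: avoid0.
  move=> _ /mapP[T T_in ->]; rewrite VSU inE negb_or target_notin_prefix ?andbT; last first.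
    by rewrite -ltnS prednK // (leq_ltn_trans _ kn).
  have [kn1|kn1] := ltnP k n.-1.
    apply: contra (target_notin_part kn1); apply: mem_VS_subset.
    by apply: sub; rewrite !mem_cat T_in ?orbT.
  apply: only_last => // j jn jB2; apply/eqP; rewrite eqn_leq -ltnS prednK ?jn //=.
    by rewrite (leq_trans kn1) // leqNgt; apply/negP => /noB2.
  exact: leq_ltn_trans jn.
have [Pp' [Pn' [Cs' K']]] := psi_cover_setU (meet_at_prefix k0 kn) K1 K.
by exists Pp', Pn', Tx1, Ty, Cs'; rewrite prefixS; split=> //; split=> //; left; apply: avoid0.
Qed.

Lemma prefix_inv_le k : k <= n -> prefix_inv k.
Proof.
elim: k => [_|k IH kn]; first by left; split=> //; left.
have [kB2|notB2] := classic (inB2 x p k).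
- exact: prefix_inv_B2 kB2 (IH (ltnW kn)).
- exact: prefix_inv_edge notB2 (IH (ltnW kn)).
Qed.

Lemma psi2_cover_avoiding_series : (exists i, i < n /\ inB2 x p i) ->
  psi2_cover_avoiding ends neg [set: E] (x 0) (x n).
Proof.
case=> i [iN iB2]; case: (prefix_inv_le (leqnn n)) => [[noB2 _]|].
  by case: (noB2 i iN iB2).
case=> _ [Pp [Pn [Tx [Ty [Cs [K [avoidX [avoidY|[j /andP[nj jn]]]]]]]]]].
  by exists Pp, Pn, Tx, Ty, Cs; rewrite -prefix_all.
by move: (leq_ltn_trans nj jn); rewrite ltnn.
Qed.

End Construction.

Section Exclusion.

Hypothesis only_first_B2 : forall i, i < n -> inB2 x p i -> i = 0.

(* The clause for [1 < j] is what the next step needs; it holds because [x j] is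
   then a leaf of the prefix, out of reach of the tadpoles at [x 0]. *)
Definition prefix_cover_avoiding j : Prop :=
  exists Pp Pn Tx Ty Cs, psi_cover (prefix j) (x 0) (x j) 2 Pp Pn Tx Ty Cs /\
    (forall T, T \in Ty -> x 0 \notin VS T) /\ (1 < j -> forall T, T \in Tx -> x j \notin VS T).

(* Peel off the last part, a single edge hanging at the leaf [x j.+1]. *)
Lemma prefix_cover_avoiding_pred j : 0 < j -> j < n ->
  prefix_cover_avoiding j.+1 -> prefix_cover_avoiding j.
Proof.
move=> j0 jn [Pp [Pn [Tx [Ty [Cs [K [avoidY avoidX]]]]]]].
have [notB2 notB2'] : ~ inB2 x p j /\ (1 < j -> ~ inB2 x p j.-1).
  by split=> [|j1] /only_first_B2; lia.
have [e pe] := part_edge jn notB2; have [_ xj xj1 xx] := part_terminals jn.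
have x0P := source_notin_part j0 jn.
have x0j : x 0 != x j by apply: contraNneq x0P => ->.
rewrite pe !VS_set1 in xj xj1.
have eA : e \notin prefix j.
  have : e \in part p j by rewrite pe set11.
  by rewrite !inE -leqNgt => /eqP->.
have K' : psi_cover (prefix j :|: [set e]) (x 0) (x j.+1) 2 Pp Pn Tx Ty Cs.
  by rewrite -pe -prefixS.
have K2 := psi_cover_pendant eA xx xj xj1 (next_terminal_notin_prefix jn) x0j K' (avoidX j0).
do 5!eexists; split; first exact: K2.
split=> [_ /mapP[T T_in ->]|j1 T T_in].
  by apply: contra (avoidY T T_in); apply: mem_VS_subset; exact: subD1set.
case: (K2) => _ [_ [_ [_ [_ [_ [_ [_ [hx _]]]]]]]].
apply: tadpole_notin_leaf (hx T T_in) _ (deg_prefix_terminal j1 (ltnW jn) (notB2' j1)) _.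
  by apply: (psi_cover_sub K2); rewrite !mem_cat T_in !orbT.
by rewrite eq_sym.
Qed.


Lemma psi2_cover_avoiding_first_part : psi2_cover_avoiding ends neg [set: E] (x 0) (x n) ->
  psi2_cover_avoiding_at_target ends neg (part p 0) (x 0) (x 1).
Proof.
move=> [Pp [Pn [Tx [Ty [Cs [K [avoidX avoidY]]]]]]].
have down d : d < n -> prefix_cover_avoiding (n - d).
  elim: d => [_|d IH dn]; first by exists Pp, Pn, Tx, Ty, Cs; rewrite subn0 prefix_all.
  apply: prefix_cover_avoiding_pred; [lia | lia |].
  by rewrite (_ : (n - d.+1).+1 = n - d); [apply: IH; lia | lia].
have [|Pp1 [Pn1 [Tx1 [Ty1 [Cs1 [K1 [avoid1 _]]]]]]] := down n.-1; first by lia.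
exists Pp1, Pn1, Tx1, Ty1, Cs1; split=> //.
by move: K1; rewrite (_ : n - n.-1 = 1) ?prefixS ?prefix0 ?set0U //; lia.
Qed.

End Exclusion.
End SeriesConnection.

Section Reversal.
Variables (V E : finType) (ends : E -> V * V) (neg : E -> bool).
Variables (n : nat) (x : nat -> V) (p : E -> nat).
Hypotheses (decomp : series_decomp ends neg (x 0) (x n) n x p) (n0 : 0 < n).

Definition rev_terminal i := x (n - i).
Definition rev_part e := n.-1 - p e.

Lemma part_rev i : i < n -> part rev_part i = part p (n.-1 - i).
Proof.
case: decomp => _ [_ [pn _]] iN; apply/setP => e; rewrite !inE /rev_part.
by move: (pn e) => ?; apply/eqP/eqP => ?; lia.
Qed.

Lemma rev_terminal_part i : i < n ->
  rev_terminal i = x (n.-1 - i).+1 /\ rev_terminal i.+1 = x (n.-1 - i).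
Proof. by move=> iN; rewrite /rev_terminal; split; congr x; lia. Qed.

Lemma series_decomp_rev :
  series_decomp ends neg (rev_terminal 0) (rev_terminal n) n rev_terminal rev_part.
Proof.
case: (decomp) => _ [_ [pn [parts shared]]].
split=> //; split=> //; split; first by move=> e; rewrite /rev_part; lia.
split=> [i iN | i j v ij jN].
  have [-> ->] := rev_terminal_part iN; rewrite part_rev //.
  have [|c [xi [xi1 loop]]] := parts (n.-1 - i); first by lia.
  by do 3!split=> //; rewrite -loop; split=> /esym.
rewrite !part_rev 1?(ltn_trans ij) // and_comm (shared (n.-1 - j) (n.-1 - i)); try lia.
split=> vk k /andP[ik kj]; rewrite /rev_terminal.
- by apply: vk; apply/andP; split; lia.
- by rewrite (_ : k = n - (n - k)); [apply: vk; apply/andP; split | ]; lia.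
Qed.

Lemma inB2_rev i : i < n -> inB2 rev_terminal rev_part i <-> inB2 x p (n.-1 - i).
Proof.
move=> iN; rewrite /inB2 part_rev //; have [-> ->] := rev_terminal_part iN.
by rewrite eq_sym.
Qed.

End Reversal.

Section Alternatives.
Variables (V E : finType) (ends : E -> V * V) (neg : E -> bool).
Variables (n : nat) (x : nat -> V) (p : E -> nat).
Hypotheses (decomp : series_decomp ends neg (x 0) (x n) n x p)
  (noB0 : forall i, i < n -> ~ single_neg_loop ends neg (part p i)) (n2 : 1 < n).

Lemma psi2_cover_avoiding_last_part : (forall i, i < n -> inB2 x p i -> i = n.-1) ->
  psi2_cover_avoiding ends neg [set: E] (x 0) (x n) ->
  psi2_cover_avoiding_at_target ends neg (part p n.-1) (x n) (x n.-1).
Proof.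
move=> only_last /psi2_cover_avoidingC avoid; have n0 : 0 < n by apply: ltnW.
have noB0' i : i < n -> ~ single_neg_loop ends neg (part (rev_part n p) i).
  by move=> iN; rewrite (part_rev decomp n0) //; apply: noB0; lia.
have only_first i : i < n -> inB2 (rev_terminal n x) (rev_part n p) i -> i = 0.
  by move=> iN /(inB2_rev decomp n0 iN) /only_last; lia.
have := psi2_cover_avoiding_first_part (series_decomp_rev decomp n0) noB0' n2 only_first.
by rewrite (part_rev decomp n0) // subn0 /rev_terminal subn0 subn1 subnn; apply.
Qed.

Lemma B2_cover_choice :
  (forall i, i < n -> inB2 x p i -> has_psi_cover ends neg (part p i) (x i) (x i.+1) 2) ->
  ((forall i, i < n -> inB2 x p i -> i = 0) ->
     psi2_cover_avoiding_at_target ends neg (part p 0) (x 0) (x 1)) ->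
  ((forall i, i < n -> inB2 x p i -> i = n.-1) ->
     psi2_cover_avoiding_at_target ends neg (part p n.-1) (x n) (x n.-1)) ->
  forall i, i < n -> inB2 x p i -> exists Pp Pn Tx Ty Cs,
    psi_cover ends neg (part p i) (x i) (x i.+1) 2 Pp Pn Tx Ty Cs /\
    ((forall j, j < n -> inB2 x p j -> j = 0) -> forall T, T \in Ty -> x 0 \notin VS ends T) /\
    ((forall j, j < n -> inB2 x p j -> j = n.-1) -> forall T, T \in Tx -> x n \notin VS ends T).
Proof.
move=> cover first last i iN iB2.
have not_both : ~ ((forall j, j < n -> inB2 x p j -> j = 0) /\
                   (forall j, j < n -> inB2 x p j -> j = n.-1)).
  by case=> /(_ i iN iB2) i0 /(_ i iN iB2); lia.
have [only0|not0] := classic (forall j, j < n -> inB2 x p j -> j = 0).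
  have [Pp [Pn [Tx [Ty [Cs [K avoid]]]]]] := first only0.
  rewrite (only0 i iN iB2); exists Pp, Pn, Tx, Ty, Cs.
  by do 2!split=> //; move=> onlyl; case: not_both.
have [onlyl|notl] := classic (forall j, j < n -> inB2 x p j -> j = n.-1).
  have [Pp [Pn [Tx [Ty [Cs [K avoid]]]]]] := last onlyl.
  rewrite (onlyl i iN iB2) (prednK (ltnW n2)).
  by exists Pp, Pn, Ty, Tx, Cs; split; [exact: psi_coverC | split].
have [Pp [Pn [Tx [Ty [Cs K]]]]] := cover i iN iB2.
by exists Pp, Pn, Tx, Ty, Cs.
Qed.

End Alternatives.
Theorem mainTheorem3 (V E : finType) (ends : E -> V * V) (neg : E -> bool)
  (n : nat) (x : nat -> V) (p : E -> nat) :
  (* G has no isolated vertices *)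
  (forall v : V, exists e : E, incident ends v e) ->
  (* G = S(H_1,...,H_n) with H_{i+1} = part p i, terminals x i, x i.+1 *)
  series_decomp ends neg (x 0) (x n) n x p ->
  (* n = |B(G)| is maximal *)
  (forall m x' p', series_decomp ends neg (x 0) (x n) m x' p' -> m <= n) ->
  2 <= n ->
  (* B_0(G) is empty *)
  (forall i, i < n -> ~ single_neg_loop ends neg (part p i)) ->
  (* B_2(G) is nonempty *)
  (exists i, i < n /\ inB2 x p i) ->
  (* every part in B_2(G) has a Psi(2)-cover *)
  (forall i, i < n -> inB2 x p i -> has_psi_cover ends neg (part p i) (x i) (x i.+1) 2) ->
  let P1 := exists Pp Pn Tx Ty Cs,
      psi_cover ends neg [set: E] (x 0) (x n) 2 Pp Pn Tx Ty Cs /\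
      (forall T, T \in Tx -> x n \notin VS ends T) /\
      (forall T, T \in Ty -> x 0 \notin VS ends T) in
  let P2 := (forall i, i < n -> (inB2 x p i <-> i = 0)) /\
      (forall Pp Pn Tx Ty Cs,
         psi_cover ends neg (part p 0) (x 0) (x 1) 2 Pp Pn Tx Ty Cs ->
         exists T, T \in Ty /\ x 0 \in VS ends T) in
  let P3 := (forall i, i < n -> (inB2 x p i <-> i = n.-1)) /\
      (forall Pp Pn Tx Ty Cs,
         psi_cover ends neg (part p n.-1) (x n.-1) (x n) 2 Pp Pn Tx Ty Cs ->
         exists T, T \in Tx /\ x n \in VS ends T) in
  (P1 /\ ~ P2 /\ ~ P3) \/ (~ P1 /\ P2 /\ ~ P3) \/ (~ P1 /\ ~ P2 /\ P3).
Proof.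
move=> _ decomp _ n2 noB0 someB2 B2cover P1 P2 P3.
have only_first_B2 : P2 -> forall i, i < n -> inB2 x p i -> i = 0.
  by case=> only _ i iN /(only i iN).
have only_last_B2 : P3 -> forall i, i < n -> inB2 x p i -> i = n.-1.
  by case=> only _ i iN /(only i iN).
have P2E : P2 <-> (forall i, i < n -> (inB2 x p i <-> i = 0)) /\
    ~ psi2_cover_avoiding_at_target ends neg (part p 0) (x 0) (x 1).
  by rewrite (psi2_cover_avoiding_at_targetP ends neg).
have P3E : P3 <-> (forall i, i < n -> (inB2 x p i <-> i = n.-1)) /\
    ~ psi2_cover_avoiding_at_target ends neg (part p n.-1) (x n) (x n.-1).
  by rewrite (psi2_cover_avoiding_at_sourceP ends neg).
have not12 : P1 -> ~ P2.
  move=> avoid /[dup] /only_first_B2 only /P2E[_]; apply.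
  exact: psi2_cover_avoiding_first_part decomp noB0 n2 only avoid.
have not13 : P1 -> ~ P3.
  move=> avoid /[dup] /only_last_B2 only /P3E[_]; apply.
  exact: psi2_cover_avoiding_last_part decomp noB0 n2 only avoid.
have not23 : P2 -> ~ P3.
  move=> /only_first_B2 first /only_last_B2 last; case: someB2 => i [iN iB2].
  by move: (first i iN iB2) (last i iN iB2); lia.
have P1_of : ~ P2 -> ~ P3 -> P1.
  move=> notP2 notP3; apply: (psi2_cover_avoiding_series decomp noB0 n2 _ someB2).
  have [j [jN jB2]] := someB2.
  apply: (B2_cover_choice n2 B2cover) => only; apply: NNPP => notA.
  - apply/notP2/P2E; split=> // i iN; split=> [|->]; first exact: only.
    by rewrite -(only j jN jB2).
  - apply/notP3/P3E; split=> // i iN; split=> [|->]; first exact: only.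
    by rewrite -(only j jN jB2).
by case: (classic P2); case: (classic P3); tauto.
Qed.
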